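(* (i) If $C$ is a self-orthogonal linear code over $\mathbb{Z}_4+u\mathbb{Z}_4$, then for every codeword $c\in C$ and each $i\in\{1,2\}$, the number $n_{\mathfrak{U}_i}(c)$ of coordinates of $c$ lying in $\mathfrak{U}_i$ is even. (ii) If $C$ is a self-dual code over $\mathbb{Z}_4+u\mathbb{Z}_4$ of length $n$, then the vector $(2u,2u,\dots,2u)$ of length $n$ belongs to $C$.
   Context: $\mathbb{Z}_4+u\mathbb{Z}_4$ is the commutative ring of characteristic $4$ with $u^2=0$. A linear code of length $n$ is a submodule $C$ of $(\mathbb{Z}_4+u\mathbb{Z}_4)^n$; its dual $C^\perp$ is taken with respect to the Euclidean inner product $\sum_i x_iy_i$ computed in the ring; $C$ is self-orthogonal if $C\subseteq C^\perp$ and self-dual if $C=C^\perp$. The units of first type are $\mathfrak{U}_1=\{1,3,1+2u,3+2u\}$ and the units of second type are $\mathfrak{U}_2=\{1+u,3+u,1+3u,3+3u\}$. *)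

From mathcomp Require Import all_boot all_algebra.
Set Implicit Arguments. Unset Strict Implicit. Unset Printing Implicit Defensive.
Import GRing.Theory.
Local Open Scope ring_scope.

(* The ring Z4 + u Z4 (u^2 = 0): the pair (a, b) represents a + u b. *)
Definition R4 : finType := ('Z_4 * 'Z_4)%type.

Definition r4add (x y : R4) : R4 := (x.1 + y.1, x.2 + y.2).
Definition r4mul (x y : R4) : R4 := (x.1 * y.1, x.1 * y.2 + x.2 * y.1).
Definition r4zero : R4 := (0, 0).

Definition word (n : nat) := {ffun 'I_n -> R4}.

Definition linear_code (n : nat) (C : {set word n}) : Prop :=
  [ffun=> r4zero] \in C /\
  (forall x y, x \in C -> y \in C -> [ffun i => r4add (x i) (y i)] \in C) /\
  (forall (a : R4) x, x \in C -> [ffun i => r4mul a (x i)] \in C).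

Definition inner (n : nat) (x y : word n) : R4 :=
  \big[r4add/r4zero]_(i < n) r4mul (x i) (y i).

Definition dual (n : nat) (C : {set word n}) : {set word n} :=
  [set y | [forall x in C, inner x y == r4zero]].

Definition self_orthogonal (n : nat) (C : {set word n}) : Prop := C \subset dual C.
Definition self_dual (n : nat) (C : {set word n}) : Prop := C = dual C.

Definition U1 : {set R4} := [set (1, 0); (3%:R, 0); (1, 2%:R); (3%:R, 2%:R)].
Definition U2 : {set R4} := [set (1, 1); (3%:R, 1); (1, 3%:R); (3%:R, 3%:R)].

Definition nU (U : {set R4}) (n : nat) (c : word n) : nat := #|[set i | c i \in U]|.

(* Write a coordinate as a + u b.  In Z4, a^2 is 1 for a odd and 0 for a even, and
   2ab is 2 exactly when a and b are both odd, i.e. when a + u b is a unit of second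
   type.  So for a self-orthogonal codeword c, the identities c.c = 0 in the a- and
   b-parts read n_U1(c) + n_U2(c) = 0 (mod 4) and 2 n_U2(c) = 0 (mod 4).  For (ii),
   x.(2u,...,2u) = u (2 sum a_i) = u (2 sum a_i^2), which vanishes because the
   a-part of x.x does; hence (2u,...,2u) lies in the dual, which is C. *)
From mathcomp Require Import all_boot all_algebra zify.
Local Open Scope ring_scope.
Import GRing.Theory.

Lemma Zp_nat_eq0 (p k : nat) : (1 < p)%N -> ((k%:R : 'Z_p) == 0) = (p %| k)%N.
Proof. by move=> p_gt1; rewrite -val_eqE /= val_Zp_nat. Qed.

Lemma sumr_nat_indicator (R : nzSemiRingType) (I : finType) (P : pred I) :
  \sum_(i : I) (P i)%:R = #|[set i | P i]|%:R :> R.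
Proof.
rewrite -sum1dep_card natr_sum [RHS]big_mkcond /=.
by apply: eq_bigr => i _; case: (P i).
Qed.

Lemma Z4_mul2_sqr (a : 'Z_4) : 2%:R * a ^+ 2 = 2%:R * a.
Proof. by case: a => [[|[|[|[|?]]]] ?] //; apply/eqP. Qed.

Lemma r4mul_self_fst (z : R4) : (r4mul z z).1 = ((z \in U1) + (z \in U2))%N%:R.
Proof. by rewrite !inE; case: z => [[[|[|[|[|?]]]] ?] [[|[|[|[|?]]]] ?]] //; apply/eqP. Qed.

Lemma r4mul_self_snd (z : R4) : (r4mul z z).2 = (2 * (z \in U2))%N%:R.
Proof. by rewrite !inE; case: z => [[[|[|[|[|?]]]] ?] [[|[|[|[|?]]]] ?]] //; apply/eqP. Qed.

Lemma inner_fst n (x y : word n) : (inner x y).1 = \sum_(i < n) (r4mul (x i) (y i)).1.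
Proof. exact: (big_morph fst). Qed.

Lemma inner_snd n (x y : word n) : (inner x y).2 = \sum_(i < n) (r4mul (x i) (y i)).2.
Proof. exact: (big_morph snd). Qed.

Lemma inner_self_fst n (c : word n) : (inner c c).1 = (nU U1 c + nU U2 c)%:R.
Proof.
rewrite inner_fst natrD -!sumr_nat_indicator -big_split.
by apply: eq_bigr => i _; rewrite r4mul_self_fst natrD.
Qed.

Lemma inner_self_snd n (c : word n) : (inner c c).2 = (2 * nU U2 c)%:R.
Proof.
rewrite inner_snd natrM -sumr_nat_indicator mulr_sumr.
by apply: eq_bigr => i _; rewrite r4mul_self_snd natrM.
Qed.

Lemma isotropic_nU_even {n} {c : word n} :
  inner c c = r4zero -> ~~ odd (nU U1 c) /\ ~~ odd (nU U2 c).
Proof.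
move=> cc0.
have /eqP : (inner c c).1 = 0 by rewrite cc0.
have /eqP : (inner c c).2 = 0 by rewrite cc0.
rewrite inner_self_fst inner_self_snd !Zp_nat_eq0 //.
lia.
Qed.

Lemma inner_two_u_isotropic {n} {x : word n} :
  inner x x = r4zero -> inner x [ffun=> ((0 : 'Z_4), (2%:R : 'Z_4))] = r4zero.
Proof.
move=> xx0; apply: injective_projections; rewrite /= ?inner_fst ?inner_snd.
  by apply: big1 => i _; rewrite ffunE /= mulr0.
apply: etrans (_ : 2%:R * (inner x x).1 = 0); last by rewrite xx0 mulr0.
rewrite inner_fst mulr_sumr; apply: eq_bigr => i _.
by rewrite ffunE /= mulr0 addr0 mulrC -Z4_mul2_sqr expr2.
Qed.

Lemma self_orthogonal_isotropic {n} {C : {set word n}} {c} :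
  self_orthogonal C -> c \in C -> inner c c = r4zero.
Proof.
by move=> /subsetP CCd cC; move/CCd: (cC); rewrite inE => /forall_inP/(_ c cC)/eqP.
Qed.

Lemma self_dual_self_orthogonal {n} {C : {set word n}} : self_dual C -> self_orthogonal C.
Proof. by rewrite /self_orthogonal => <-. Qed.

Theorem theorem4p2 :
  (forall (n : nat) (C : {set word n}),
      linear_code C -> self_orthogonal C ->
      forall c, c \in C -> ~~ odd (nU U1 c) /\ ~~ odd (nU U2 c)) /\
  (forall (n : nat) (C : {set word n}),
      linear_code C -> self_dual C ->
      [ffun=> ((0 : 'Z_4), (2%:R : 'Z_4))] \in C).
Proof.
split=> [n C _ CCd c cC | n C _ CdC].
  exact: isotropic_nU_even (self_orthogonal_isotropic CCd cC).
have CCd := self_dual_self_orthogonal CdC.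
rewrite [in X in _ \in X]CdC inE; apply/forall_inP => x xC.
exact/eqP/inner_two_u_isotropic/(self_orthogonal_isotropic CCd xC).
Qed.
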